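(* Let $S$ be an instance of SCS-RC, let $T$ be the set computed by \textsf{MGREEDY-RC} on $S$, and let $\mathcal C$ be the cycle cover of $G_S$ produced by \textsf{MGREEDY-RC}. For each cycle $C\in\mathcal C$ let $x_C$ be a string satisfying properties (1)–(4) below, and let $A=\{x_C : C\in\mathcal C\}$. Then $\|T\| \le \|A\|$, where $\|T\|=\sum_{t\in T}|t|$ and $\|A\|=\sum_{C\in\mathcal C}|x_C|$.
   Context: Alphabet $\Sigma=\{\texttt a,\texttt t,\texttt g,\texttt c\}$ with complement $\bar{\texttt a}=\texttt t$, $\bar{\texttt t}=\texttt a$, $\bar{\texttt g}=\texttt c$, $\bar{\texttt c}=\texttt g$; the reverse complement of $s=b_1\cdots b_n$ is $\bar{s}^R=\bar{b_n}\cdots\bar{b_1}$, and $\bar S^R=\{\bar s^R: s\in S\}$. An instance of SCS-RC is a finite set $S=\{s_1,\dots,s_m\}$ of strings over $\Sigma$ such that no string of $S\cup\bar S^R$ is a substring of another. For strings $x,y$, $\mathrm{ov}(x,y)$ is the length of the longest $v$ with $x=uv$, $y=vw$ for nonempty $u,w$; $\mathrm{pref}(x,y)=u$; $\mathrm{dist}(x,y)=|x|-\mathrm{ov}(x,y)$; $\langle x_1,\dots,x_r\rangle=\mathrm{pref}(x_1,x_2)\cdots\mathrm{pref}(x_{r-1},x_r)\,x_r$. The distance graph $G_S$ is the complete directed graph (with loops) on $S\cup\bar S^R$ with edge weights $\mathrm{dist}$; a cycle $z_1,\dots,z_r,z_1$ (distinct vertices) has weight $w(C)=\sum_i\mathrm{dist}(z_i,z_{i+1})$,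 $z_{r+1}=z_1$; a cycle cover contains, as vertex-disjoint cycles, exactly one of $s_i,\bar{s_i}^R$ for each $i$. \textsf{MGREEDY-RC} on $S$: set $T=\emptyset$; while $S\ne\emptyset$: among pairs $(x,y)\in (S\cup\bar S^R)^2$ with $x=y$, or with $x\ne y$ and $\bar x^R\ne y$, pick one maximizing $\mathrm{ov}(x,y)$ (ties arbitrary); if $x=y$, remove $x,\bar x^R$ from $S$ and add $x$ to $T$; otherwise remove $x,\bar x^R,y,\bar y^R$ from $S$ and add $\langle x,y\rangle$. Each current string $z$ is associated with a sequence $(z_1,\dots,z_h)$ of vertices of $G_S$ with $z=\langle z_1,\dots,z_h\rangle$: initially $s_i\leftrightarrow(s_i)$; $\bar z^R\leftrightarrow(\bar{z_h}^R,\dots,\bar{z_1}^R)$; a merged string $\langle x,y\rangle$ is associated with the concatenation of the sequences of $x$ and $y$; when $z$ with sequence $(z_1,\dots,z_h)$ is moved to $T$, the cycle $z_1,\dots,z_h,z_1$ is formed. These cycles form the cycle cover $\mathcal C$ (which is an optimal cycle cover), and $T$ consists of the strings $\langle z_1,\dots,z_h\rangle$ for the cycles $z_1,\dots,z_h,z_1\in\mathcal C$. Periodicity: for a finite string $s$, $\mathrm{factor}(s)$ is the shortest $x$ with $s=x^iy$, $i\ge1$, $y$ a (possibly empty) prefix of $x$; for a semi-infinite string $s$ with $s=xs$ for some nonempty $x$ ($s$ periodic), $\mathrm{factor}(s)$ is the shortest such $x$; $\mathrm{period}(s)=|\mathrm{factor}(s)|$. Strings (finite or periodic semi-infinite) $x,y$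 are equivalent if $\mathrm{factor}(x)=pq$, $\mathrm{factor}(y)=qp$ for some $p,q$, inequivalent otherwise. For semi-infinite $\alpha=c_1c_2\cdots$, $\alpha[k]=c_kc_{k+1}\cdots$; for finite $s$, $\mathrm{ov}(s,\alpha[k])$ is the length of the longest $v$ with $s=uv$, $u$ nonempty, $v$ a prefix of $\alpha[k]$. $\alpha[k]$ is a critical rotation of a periodic semi-infinite $\alpha$ if $\mathrm{ov}(s,\alpha[k])\le\mathrm{period}(s)+\tfrac12\mathrm{period}(\alpha)$ for every finite $s$ inequivalent to $\alpha$. Properties of $x_C$, for the cycle $C=z_1,\dots,z_r,z_1$ with $\langle z_1,\dots,z_r\rangle\in T$: there is an index $j\in\{1,\dots,r\}$ such that (1) $\langle z_{j+1},\dots,z_r,z_1,\dots,z_j\rangle$ is a suffix of $x_C$; (2) $x_C$ is a substring of $y_C=\langle z_j,\dots,z_r,z_1,\dots,z_j\rangle$; (3) $x_C$ is equivalent to $\langle z_{j+1},\dots,z_r,z_1,\dots,z_j\rangle$; (4) $\mathrm{factor}(x_C)^\infty$ is a critical rotation of $\mathrm{factor}(\langle z_1,\dots,z_r\rangle)^\infty$. (Such strings are known to exist.) *)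

From HB Require Import structures.
From mathcomp Require Import all_boot.
Set Implicit Arguments.
Unset Strict Implicit.
Unset Printing Implicit Defensive.

Inductive base := Ba | Bt | Bg | Bc.

Definition base_eqb (x y : base) : bool :=
  match x, y with
  | Ba, Ba | Bt, Bt | Bg, Bg | Bc, Bc => true
  | _, _ => false
  end.
Lemma base_eqP : Equality.axiom base_eqb.
Proof. by case; case; constructor. Qed.
HB.instance Definition _ := hasDecEq.Build base base_eqP.

Definition comp (b : base) : base :=
  match b with Ba => Bt | Bt => Ba | Bg => Bc | Bc => Bg end.

Definition str := seq base.

Definition rc (s : str) : str := map comp (rev s).

(** * Vertices of G_S: (i, false) stands for s_i, (i, true) for \bar{s_i}^R *)
Definition vertex := (nat * bool)%type.

Definition vstr (S : seq str) (v : vertex) : str :=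
  if v.2 then rc (nth [::] S v.1) else nth [::] S v.1.

Definition rcseq (sq : seq vertex) : seq vertex :=
  rev (map (fun v => (v.1, ~~ v.2)) sq).

(** SCS-RC instance: no string of S ∪ \bar S^R is a substring of another
    (strings indexed by distinct i are never substrings of each other; for the
    same index, s_i and \bar s_i^R have equal length so the condition is automatic). *)
Definition scs_rc_instance (S : seq str) : Prop :=
  forall i j (b b' : bool), i < size S -> j < size S -> i != j ->
    ~~ infix (vstr S (i, b)) (vstr S (j, b')).

(** ov(x,y): longest v with x = uv, y = vw, u,w nonempty *)
Definition ov (x y : str) : nat :=
  \max_(k < minn (size x) (size y) | drop (size x - k) x == take k y) k.

Definition pref (x y : str) : str := take (size x - ov x y) x.
Definition dist (x y : str) : nat := size x - ov x y.

Fixpoint merge (l : seq str) : str :=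
  match l with
  | [::] => [::]
  | [:: x] => x
  | x :: ((y :: _) as l') => pref x y ++ merge l'
  end.

(** a current string together with its associated vertex sequence;
    the pair {z, \bar z^R} is stored once, orientation chosen by a boolean *)
Definition item := (str * seq vertex)%type.

Definition orient (o : bool) (it : item) : item :=
  if o then (rc it.1, rcseq it.2) else it.

Definition gstate := (seq item * seq item)%type. (* (current S, T) *)

Definition init_state (S : seq str) : gstate :=
  ([seq (nth [::] S i, [:: (i, false)]) | i <- iota 0 (size S)], [::]).

(** the pair (x,y) = (orient o it_k, orient o' it_l) is admissible iff
    x = y (same item, same orientation) or x ≠ y and \bar x^R ≠ y (different items) *)
Definition admissible (k l : nat) (o o' : bool) : bool :=
  ((k == l) && (o == o')) || (k != l).

Definition max_ov (items : seq item) (v : nat) : Prop :=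
  forall k l (o o' : bool), k < size items -> l < size items ->
    admissible k l o o' ->
    ov (orient o (nth ([::], [::]) items k)).1
       (orient o' (nth ([::], [::]) items l)).1 <= v.

Inductive gstep : gstate -> gstate -> Prop :=
  | gstep_self (items rest T : seq item) (it : item) (o : bool) :
      perm_eq items (it :: rest) ->
      max_ov items (ov (orient o it).1 (orient o it).1) ->
      gstep (items, T) (rest, rcons T (orient o it))
  | gstep_merge (items rest T : seq item) (it1 it2 : item) (o1 o2 : bool) :
      perm_eq items (it1 :: it2 :: rest) ->
      max_ov items (ov (orient o1 it1).1 (orient o2 it2).1) ->
      let x := orient o1 it1 in
      let y := orient o2 it2 in
      gstep (items, T)
            (rcons rest (pref x.1 y.1 ++ y.1, x.2 ++ y.2), T).

(** grun st T : from state st the algorithm can terminate with output T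
    (list of (string of T, its cycle z_1..z_h)) *)
Inductive grun : gstate -> seq item -> Prop :=
  | grun_done (T : seq item) : grun ([::], T) T
  | grun_step (st st' : gstate) (T : seq item) :
      gstep st st' -> grun st' T -> grun st T.

Definition mgreedy_rc (S : seq str) (T : seq item) : Prop :=
  grun (init_state S) T.

(** x^i y = s with i >= 1 and y a prefix of x (every such x is a prefix of s,
    so it suffices to search lengths p <= |s| and x = take p s) *)
Definition rep_len (s : str) (p : nat) : bool :=
  [exists i : 'I_(size s).+1, exists k : 'I_p.+1,
     (0 < i) && (s == flatten (nseq i (take p s)) ++ take k (take p s))].

Definition factor (s : str) : str :=
  take (find (rep_len s) (iota 0 (size s).+1)) s.
Definition period (s : str) : nat := size (factor s).

Definition sinf := nat -> base.

Definition infpow (x : str) : sinf := fun n => nth Ba x (n %% size x).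

Definition prepends (x : str) (al : sinf) : Prop :=
  forall n, al n = if n < size x then nth Ba x n else al (n - size x).

Definition inf_factor (al : sinf) (x : str) : Prop :=
  0 < size x /\ prepends x al /\
  forall y, 0 < size y -> prepends y al -> size x <= size y.

Definition inf_period (al : sinf) (p : nat) : Prop :=
  exists x, inf_factor al x /\ size x = p.

Definition equiv_fin (x y : str) : Prop :=
  exists p q, factor x = p ++ q /\ factor y = q ++ p.

Definition equiv_fin_inf (s : str) (al : sinf) : Prop :=
  exists p q, factor s = p ++ q /\ inf_factor al (q ++ p).

(** α[k+1] (0-indexed shift) *)
Definition shift (al : sinf) (k : nat) : sinf := fun n => al (k + n).

Definition ov_inf (s : str) (al : sinf) : nat :=
  \max_(l < size s | drop (size s - l) s == mkseq al l) l.

(** γ is a critical rotation of the periodic semi-infinite α: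
    γ = α[k] for some k, and ov(s, α[k]) <= period(s) + period(α)/2 for every
    finite s inequivalent to α (doubled to stay in nat) *)
Definition critical_rotation (ga al : sinf) : Prop :=
  exists k, (forall n, ga n = shift al k n) /\
    forall (s : str), ~ equiv_fin_inf s al ->
      forall pa, inf_period al pa ->
        2 * ov_inf s (shift al k) <= 2 * period s + pa.

(** properties (1)-(4) of x_C for cycle C = z_1..z_r (as a vertex sequence) *)
Definition xC_props (S : seq str) (C : seq vertex) (x : str) : Prop :=
  exists j, 1 <= j <= size C /\
    let w := merge (map (vstr S) (rot j C)) in
    [/\ suffix w x,
        infix x (merge (map (vstr S) (nth (0, false) C j.-1 :: rot j C))),
        equiv_fin x w &
        critical_rotation (infpow (factor x))
                          (infpow (factor (merge (map (vstr S) C))))].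

(* Since no string of the instance is a substring of another, merging a pair
   of maximum overlap never creates a larger admissible overlap; so the
   maximum K of the overlaps still available never increases during a run of
   MGREEDY-RC.  Hence every current string <z_1, ..., z_h> was assembled with
   all inner overlaps ov(z_i, z_i+1) >= K, while, when it is moved to T, its
   closing overlap satisfies ov(z_h, z_1) <= ov(t, t) <= K.  Cutting the
   cycle at z_j | z_j+1 instead of at z_h | z_1 trades an inner overlap for
   the closing one, so |<z_j+1, ..., z_j>| >= |t|, and by property (1) that
   string is a suffix of x_C. *)

From Pilot Require Import Defs.
From mathcomp Require Import all_boot zify.
Set Implicit Arguments.
Unset Strict Implicit.
Unset Printing Implicit Defensive.

Definition merge2 (x y : str) : str := pref x y ++ y.

Lemma drop_ov x y : drop (size x - ov x y) x = take (ov x y) y.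
Proof.
rewrite /ov; case: (minn _ _) => [|n]; first by rewrite big_ord0 subn0 drop_size take0.
have P0 : drop (size x - 0) x == take 0 y by rewrite subn0 drop_size take0.
by rewrite (bigmax_eq_arg ord0 P0); case: arg_maxnP => // i /eqP.
Qed.

Lemma ov_leq_pred_min x y : ov x y <= (minn (size x) (size y)).-1.
Proof. by apply/bigmax_leqP => -[i /=]; case: (minn _ _). Qed.

Lemma ov_leql x y : ov x y <= size x.
Proof. by have := ov_leq_pred_min x y; lia. Qed.

Lemma ov_leqr x y : ov x y <= size y.
Proof. by have := ov_leq_pred_min x y; lia. Qed.

Lemma ov_decomp x y : exists P V Q : str,
  [/\ x = P ++ V, y = V ++ Q, size V = ov x y & pref x y = P].
Proof.
exists (pref x y), (take (ov x y) y), (drop (ov x y) y); split=> //.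
- by rewrite -drop_ov cat_take_drop.
- by rewrite cat_take_drop.
- by rewrite size_takel // ov_leqr.
Qed.

Lemma ov_geq (x y v : str) : suffix v x -> prefix v y ->
  size v < size x -> size v < size y -> size v <= ov x y.
Proof.
case/suffixP=> A ->; case/prefixP=> B -> hx hy.
have lt : size v < minn (size (A ++ v)) (size (v ++ B)) by rewrite leq_min hx.
apply: (bigmax_sup (Ordinal lt)) => //=.
by rewrite size_cat addnK drop_size_cat // take_size_cat.
Qed.

Lemma ov_mono (a b x y : str) : suffix a x -> prefix b y -> ov a b <= ov x y.
Proof.
move=> ax bx; have [P [V [Q [ea eb eV _]]]] := ov_decomp a b.
have [->//|ov0] := posnP (ov a b).
have := ov_leq_pred_min a b; rewrite -eV => ovlt.
have [Va Vb] : size V < size a /\ size V < size b by lia.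
apply: ov_geq.
- by apply: suffix_trans ax; rewrite ea suffix_suffix.
- by apply: prefix_trans bx; rewrite eb prefix_prefix.
- exact: leq_trans Va (size_suffix ax).
- exact: leq_trans Vb (size_prefix bx).
Qed.

Lemma compK : involutive Defs.comp. Proof. by case. Qed.

Lemma rcK : involutive rc.
Proof. by move=> s; rewrite /rc -map_rev revK -map_comp (eq_map compK) map_id. Qed.

Lemma size_rc s : size (rc s) = size s.
Proof. by rewrite size_map size_rev. Qed.

Lemma rc_cat a b : rc (a ++ b) = rc b ++ rc a.
Proof. by rewrite /rc rev_cat map_cat. Qed.

Lemma prefix_rc (a b : str) : prefix (rc a) (rc b) = suffix a b.
Proof.
rewrite prefixE /rc size_map -map_take (inj_eq (inj_map (can_inj compK))).
by rewrite -prefixE prefix_rev.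
Qed.

Lemma ov_rc x y : ov (rc y) (rc x) = ov x y.
Proof.
rewrite /ov !size_rc minnC; apply: eq_bigl => k.
have := ltn_ord k; rewrite leq_min => /andP[kx ky].
rewrite /rc -map_drop -map_take drop_rev take_rev subKn; last exact: ltnW.
by rewrite (inj_eq (inj_map (can_inj compK))) (inj_eq (can_inj revK)) eq_sym.
Qed.

Lemma ov_rcl x y : ov (rc x) y = ov (rc y) x.
Proof. by rewrite -{1}(rcK y) ov_rc. Qed.

Lemma ov_rcr x y : ov x (rc y) = ov y (rc x).
Proof. by rewrite -{1}(rcK x) ov_rc. Qed.

Lemma rc_merge2 x y : rc (merge2 x y) = merge2 (rc y) (rc x).
Proof.
have [P [V [Q [ex ey eV eP]]]] := ov_decomp x y.
rewrite /merge2 {2}/pref ov_rc size_rc -eV eP ey !rc_cat ex rc_cat catA.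
by rewrite take_size_cat // size_cat size_rc; lia.
Qed.

Lemma prefix_shorter (a b c : str) :
  prefix a c -> prefix b c -> size a <= size b -> prefix a b.
Proof. by rewrite !prefixE => /eqP ea /eqP eb ab; rewrite -eb take_takel // ea. Qed.

Lemma suffix_shorter (a b c : str) :
  suffix a c -> suffix b c -> size a <= size b -> suffix a b.
Proof.
by rewrite -!prefix_rc -(size_rc a) -(size_rc b); apply: prefix_shorter.
Qed.

Lemma prefix_merge2 x y : prefix x (merge2 x y).
Proof.
have [P [V [Q [-> -> _ eP]]]] := ov_decomp x y.
by rewrite /merge2 eP catA prefix_prefix.
Qed.

Lemma suffix_merge2 x y : suffix y (merge2 x y).
Proof. exact: suffix_suffix. Qed.

Lemma size_merge2 x y : size (merge2 x y) = size x - ov x y + size y.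
Proof. by rewrite size_cat size_takel // leq_subr. Qed.

Lemma ov_merge2l X Y W : ov Y W <= ov X Y -> ov X W <= ov X Y ->
  (prefix Y W -> size W <= size Y) -> ov (merge2 X Y) W <= ov X Y.
Proof.
move=> YW XW YpW; have [P [V [Q [eX eY eV eP]]]] := ov_decomp X Y.
have eZ : merge2 X Y = P ++ Y by rewrite /merge2 eP.
rewrite eZ -eV in YW XW *; rewrite leqNgt; apply/negP => VltZW.
have [A [U [B [eZU eW eU _]]]] := ov_decomp (P ++ Y) W.
have := ov_leq_pred_min (P ++ Y) W; rewrite -eU size_cat => Ult.
have sufU : suffix U (P ++ Y) by rewrite eZU suffix_suffix.
have preU : prefix U W by rewrite eW prefix_prefix.
have U0 : 0 < size U by lia.
have UW : size U < size W by lia.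
have [UY|YU] := ltnP (size U) (size Y).
  have sufUY := suffix_shorter sufU (suffix_suffix P Y) (ltnW UY).
  by have := ov_geq sufUY preU UY UW; lia.
have [R eUR] : exists R : str, U = R ++ Y.
  by apply/suffixP; apply: suffix_shorter (suffix_suffix P Y) sufU YU.
have sufRP : suffix R P by move: sufU; rewrite eUR suffix_catl // eqxx.
have sufRV : suffix (R ++ V) X by rewrite eX suffix_catl // sufRP eqxx.
have preRV : prefix (R ++ V) W by rewrite eW eUR eY -!catA catA prefix_prefix.
have RVX : size (R ++ V) < size X by move: Ult U0; rewrite eX eUR !size_cat; lia.
have RVW : size (R ++ V) < size W by move: UW; rewrite eUR eY !size_cat; lia.
have := ov_geq sufRV preRV RVX RVW; rewrite size_cat => RVov.
have R0 : R = [::] by apply: size0nil; lia.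
have /YpW : prefix Y W by rewrite eW eUR R0 prefix_prefix.
by move: UW; rewrite eUR R0; lia.
Qed.

Lemma ov_merge2r X Y W : ov W X <= ov X Y -> ov W Y <= ov X Y ->
  (suffix X W -> size W <= size X) -> ov W (merge2 X Y) <= ov X Y.
Proof.
move=> WX WY XsW; rewrite -ov_rc rc_merge2 -(ov_rc X Y).
by apply: ov_merge2l; rewrite ?ov_rc // prefix_rc !size_rc.
Qed.

Lemma ov_merge2_self X Y :
  ov Y X <= ov X Y -> ov X X <= ov X Y -> ov Y Y <= ov X Y ->
  ~~ suffix X Y -> ~~ prefix Y (merge2 X Y) ->
  ov (merge2 X Y) (merge2 X Y) <= ov X Y.
Proof.
move=> YX XX YY XsY YpZ; apply: ov_merge2l.
- by apply: ov_merge2r => // /(negP XsY).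
- exact: ov_merge2r.
- by move/(negP YpZ).
Qed.

Lemma infix_cat3 (u P V Q : str) : infix u (P ++ V ++ Q) ->
  [\/ infix u (P ++ V), infix u (V ++ Q) | size V < size u].
Proof.
move=> uPVQ; have [a [b e]] : exists a b : str, P ++ V ++ Q = a ++ u ++ b.
  exact/infixP.
have := congr1 size e; rewrite !size_cat => sz.
have [auPV|PVau] := leqP (size a + size u) (size P + size V).
  set k := size P + size V - (size a + size u).
  apply: Or31; apply/infixP; exists a, (take k b).
  move: e; rewrite -(cat_take_drop k b) !catA => /(congr1 (take (size P + size V))).
  by rewrite !take_size_cat // ?size_cat // size_takel /k; lia.
have [Pa|aP] := leqP (size P) (size a); last by apply: Or33; lia.
apply: Or32; apply/infixP; exists (drop (size P) a), b.
move: e; rewrite -(cat_take_drop (size P) a) -catA => /(congr1 (drop (size P))).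
by rewrite !drop_size_cat // size_takel.
Qed.

Lemma infix_short_suffix (x y a : str) :
  suffix a x -> size a <= ov x y -> infix a y.
Proof.
have [P [V [Q [ex ey eV _]]]] := ov_decomp x y.
rewrite -eV ex ey => ax aV.
apply: suffix_infix_trans (suffix_shorter ax (suffix_suffix P V) aV) _.
exact/prefixW/prefix_prefix.
Qed.

Lemma infix_short_prefix (x y a : str) :
  prefix a y -> size a <= ov x y -> infix a x.
Proof.
have [P [V [Q [ex ey eV _]]]] := ov_decomp x y.
rewrite -eV ex ey => ay aV.
apply: prefix_infix_trans (prefix_shorter ay (prefix_prefix V Q) aV) _.
exact/suffixW/suffix_suffix.
Qed.

Lemma ov_suffix_prefix (x y a b : str) : suffix a x -> prefix b y ->
  ov x y < size a -> ov x y < size b -> ov a b = ov x y.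
Proof.
move=> ax yb xya xyb; apply/eqP; rewrite eqn_leq ov_mono //=.
have [P [V [Q [ex ey eV _]]]] := ov_decomp x y; rewrite -eV in xya xyb *.
apply: ov_geq => //.
- by apply: suffix_shorter _ ax (ltnW xya); rewrite ex suffix_suffix.
- by apply: prefix_shorter _ yb (ltnW xyb); rewrite ey prefix_prefix.
Qed.

Fixpoint overlaps (l : seq str) : seq nat :=
  if l is x :: ((y :: _) as l') then ov x y :: overlaps l' else [::].

Lemma overlaps_cons2 x y l : overlaps (x :: y :: l) = ov x y :: overlaps (y :: l).
Proof. by []. Qed.

Lemma overlaps_cat x a y b : overlaps ((x :: a) ++ y :: b) =
  rcons (overlaps (x :: a)) (ov (last x a) y) ++ overlaps (y :: b).
Proof.
elim: a x => [|z a IH] x //.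
by rewrite !cat_cons overlaps_cons2 -cat_cons IH.
Qed.

Lemma size_merge l : size (Defs.merge l) + sumn (overlaps l) = sumn (map size l).
Proof.
elim: l => [|x [|y l] IH] //.
change (size (pref x y ++ Defs.merge (y :: l)) + (ov x y + sumn (overlaps (y :: l)))
  = size x + sumn (map size (y :: l))).
rewrite size_cat size_takel ?leq_subr // -IH.
by have := ov_leql x y; lia.
Qed.

Lemma size_merge_rot l K j : {in overlaps l, forall k, K <= k} ->
  ov (last [::] l) (head [::] l) <= K -> 0 < j <= size l ->
  size (Defs.merge l) <= size (Defs.merge (rot j l)).
Proof.
move=> + + /andP[j0 jl]; have [->|{}jl] : j = size l \/ j < size l by lia.
  by rewrite rot_size.
have := cat_take_drop j l; have := size_takel (ltnW jl); have := size_drop j l.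
rewrite /rot; case: (take j l) => [|x a]; first by move=> _ /= ?; lia.
case: (drop j l) => [|y b]; first by move=> /= ?; lia.
move=> _ _ <- innerK closeK.
have inner : K <= ov (last x a) y.
  by apply: innerK; rewrite overlaps_cat mem_cat mem_rcons mem_head.
have close : ov (last y b) x <= K by move: closeK; rewrite cat_cons /= last_cat.
have := size_merge ((x :: a) ++ y :: b); have := size_merge ((y :: b) ++ x :: a).
rewrite !overlaps_cat !map_cat !sumn_cat !sumn_rcons; lia.
Qed.

Definition flip (v : vertex) : vertex := (v.1, ~~ v.2).

Definition vertex0 : vertex := (0, false).

Lemma vstr_flip S v : vstr S (flip v) = rc (vstr S v).
Proof. by case: v => i [] //=; rewrite /vstr /= rcK. Qed.

Lemma rcseq_cat s t : rcseq (s ++ t) = rcseq t ++ rcseq s.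
Proof. by rewrite /rcseq map_cat rev_cat. Qed.

Lemma head_rcseq v s : head vertex0 (rcseq (v :: s)) = flip (last v s).
Proof. by rewrite /rcseq lastI map_rcons rev_rcons. Qed.

Lemma last_rcseq v s : last vertex0 (rcseq (v :: s)) = flip v.
Proof. by rewrite /rcseq map_cons rev_cons last_rcons. Qed.

Lemma map_fst_rcseq s : map fst (rcseq s) = rev (map fst s).
Proof. by rewrite /rcseq map_rev -map_comp. Qed.

(* The strings MGREEDY-RC builds while all the overlaps it uses are at least K. *)
Inductive assembled (S : seq str) (K : nat) : str -> seq vertex -> Prop :=
| assembled_leaf v : v.1 < size S -> assembled S K (vstr S v) [:: v]
| assembled_node X1 s1 X2 s2 : assembled S K X1 s1 -> assembled S K X2 s2 ->
    K <= ov X1 X2 ->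
    ov X1 X2 = ov (vstr S (last vertex0 s1)) (vstr S (head vertex0 s2)) ->
    assembled S K (merge2 X1 X2) (s1 ++ s2).

Definition disjoint_ids (s t : seq vertex) :=
  {in map fst s, forall i, i \notin map fst t}.

Lemma disjoint_ids_sym s t : disjoint_ids s t -> disjoint_ids t s.
Proof. by move=> st i it; apply/negP => /st; rewrite it. Qed.

Section Assembled.

Variable S : seq str.

Lemma assembled_cons K X s : assembled S K X s -> exists v s', s = v :: s'.
Proof.
elim=> [v _|X1 s1 X2 s2 _ [v [s1' ->]] _ _ _ _]; first by exists v, [::].
by exists v, (s1' ++ s2).
Qed.

Lemma assembled_head_last K X s : assembled S K X s ->
  head vertex0 s \in s /\ last vertex0 s \in s.
Proof.
by case/assembled_cons=> v [s' ->]; split; [exact: mem_head | exact: (mem_last v s')].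
Qed.

Lemma assembled_ends K X s : assembled S K X s ->
  prefix (vstr S (head vertex0 s)) X /\ suffix (vstr S (last vertex0 s)) X.
Proof.
elim=> [v _|X1 s1 X2 s2 a1 [p1 _] a2 [_ s2X] _ _].
  by rewrite prefix_refl suffix_refl.
have [v [s1' e1]] := assembled_cons a1; have [w [s2' e2]] := assembled_cons a2.
split; first by apply: prefix_trans (prefix_merge2 X1 X2); rewrite e1 in p1 *.
apply: suffix_trans (suffix_merge2 X1 X2).
by rewrite e1 e2 cat_cons /= last_cat; rewrite e2 in s2X.
Qed.

Lemma assembled_range K X s : assembled S K X s -> {in s, forall v, v.1 < size S}.
Proof.
elim=> [v Sv u|X1 s1 X2 s2 _ r1 _ r2 _ _ u]; first by rewrite inE => /eqP->.
by rewrite mem_cat => /orP[/r1|/r2].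
Qed.

Lemma assembled_weaken K K' X s : K' <= K -> assembled S K X s -> assembled S K' X s.
Proof.
move=> K'K; elim=> [v Sv|X1 s1 X2 s2 _ a1 _ a2 ovK ovE]; first exact: assembled_leaf.
exact: assembled_node (leq_trans K'K ovK) ovE.
Qed.

Lemma assembled_rc K X s : assembled S K X s -> assembled S K (rc X) (rcseq s).
Proof.
elim=> [v Sv|X1 s1 X2 s2 a1 a1' a2 a2' ovK ovE].
  by rewrite -vstr_flip; apply: assembled_leaf.
have [v [s1' e1]] := assembled_cons a1; have [w [s2' e2]] := assembled_cons a2.
rewrite rc_merge2 rcseq_cat; apply: assembled_node; rewrite ?ov_rc //.
by rewrite ovE e1 e2 last_rcseq head_rcseq !vstr_flip ov_rc.
Qed.

Lemma size_assembled K X s : assembled S K X s ->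
  size X = size (Defs.merge (map (vstr S) s)).
Proof.
suff: assembled S K X s ->
    size X + sumn (overlaps (map (vstr S) s)) = sumn (map size (map (vstr S) s)).
  by move=> sz /sz; have := size_merge (map (vstr S) s); lia.
elim=> [v _|X1 s1 X2 s2 a1 sz1 a2 sz2 _ ovE]; first by rewrite /= !addn0.
have [v [s1' e1]] := assembled_cons a1; have [w [s2' e2]] := assembled_cons a2.
move: sz1 sz2 ovE; rewrite e1 e2 !map_cat !map_cons overlaps_cat !sumn_cat sumn_rcons.
rewrite size_merge2 (last_map (vstr S)) => sz1 sz2 <-.
by have := ov_leql X1 X2; lia.
Qed.

Lemma assembled_overlaps K X s : assembled S K X s ->
  {in overlaps (map (vstr S) s), forall k, K <= k}.
Proof.
elim=> [v _|X1 s1 X2 s2 a1 in1 a2 in2 ovK ovE] k //.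
have [v [s1' e1]] := assembled_cons a1; have [w [s2' e2]] := assembled_cons a2.
move: in1 in2 ovE; rewrite e1 e2 !map_cat !map_cons overlaps_cat (last_map (vstr S)).
by move=> in1 in2 <-; rewrite mem_cat mem_rcons inE => /orP[/orP[/eqP->|/in1]|/in2].
Qed.

Lemma assembled_rot K X s j : assembled S K X s -> ov X X <= K ->
  0 < j <= size s -> size X <= size (Defs.merge (map (vstr S) (rot j s))).
Proof.
move=> aX XX js; rewrite (size_assembled aX) map_rot.
apply: size_merge_rot (assembled_overlaps aX) _ _; last by rewrite size_map.
have [v [s' e]] := assembled_cons aX; have [pX sX] := assembled_ends aX.
apply: leq_trans XX; move: pX sX; rewrite e /= (last_map (vstr S)).
by move=> pX sX; apply: ov_mono.
Qed.

Hypothesis scs : scs_rc_instance S.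

Lemma vstr_not_infix u v : u.1 < size S -> v.1 < size S -> u.1 != v.1 ->
  ~~ infix (vstr S u) (vstr S v).
Proof. by case: u v => i b [j b']; apply: scs. Qed.

Lemma assembled_infix K X s u : assembled S K X s -> u.1 < size S ->
  u.1 \notin map fst s -> infix (vstr S u) X -> K < size (vstr S u).
Proof.
move=> + Su; elim=> [v Sv|X1 s1 X2 s2 _ IH1 _ IH2 ovK _].
  by rewrite inE => uv; rewrite (negPf (vstr_not_infix Su Sv uv)).
rewrite map_cat mem_cat negb_or => /andP[u1 u2].
have [P [V [Q [eX1 eX2 eV eP]]]] := ov_decomp X1 X2.
rewrite /merge2 eP eX2 => /infix_cat3; rewrite -eX2 -eX1 eV.
by case=> [/(IH1 u1)|/(IH2 u2)|/(leq_ltn_trans ovK)].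
Qed.

Lemma vstr_prefix_common u v c : u.1 < size S -> v.1 < size S -> u.1 != v.1 ->
  prefix (vstr S u) c -> prefix (vstr S v) c -> False.
Proof.
move=> Su Sv uv uc vc.
have [uv_size|vu_size] := leqP (size (vstr S u)) (size (vstr S v)).
  by apply: (negP (vstr_not_infix Su Sv uv)); apply/prefixW/(prefix_shorter uc vc).
apply: (negP (vstr_not_infix Sv Su _)); first by rewrite eq_sym.
exact/prefixW/(prefix_shorter vc uc (ltnW vu_size)).
Qed.

Lemma vstr_suffix_common u v c : u.1 < size S -> v.1 < size S -> u.1 != v.1 ->
  suffix (vstr S u) c -> suffix (vstr S v) c -> False.
Proof.
move=> Su Sv uv; rewrite -!prefix_rc -!vstr_flip.
exact: (@vstr_prefix_common (flip u) (flip v) (rc c) Su Sv uv).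
Qed.

Lemma assembled_not_prefix K K' X sX Y sY : assembled S K X sX ->
  assembled S K' Y sY -> disjoint_ids sX sY -> ~~ prefix X Y.
Proof.
move=> aX aY dXY; apply/negP => XY.
have [[hX _] [hY _]] := (assembled_head_last aX, assembled_head_last aY).
have [[pX _] [pY _]] := (assembled_ends aX, assembled_ends aY).
apply: (vstr_prefix_common (assembled_range aX hX) (assembled_range aY hY) _
          (prefix_trans pX XY) pY).
by apply/eqP => e; move: (dXY _ (map_f fst hX)); rewrite e map_f.
Qed.

Lemma assembled_not_suffix K K' X sX Y sY : assembled S K X sX ->
  assembled S K' Y sY -> disjoint_ids sX sY -> ~~ suffix X Y.
Proof.
move=> aX aY dXY; apply/negP => XY.
have [[_ lX] [_ lY]] := (assembled_head_last aX, assembled_head_last aY).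
have [[_ sXX] [_ sYY]] := (assembled_ends aX, assembled_ends aY).
apply: (vstr_suffix_common (assembled_range aX lX) (assembled_range aY lY) _
          (suffix_trans sXX XY) sYY).
by apply/eqP => e; move: (dXY _ (map_f fst lX)); rewrite e map_f.
Qed.

(* Substring-freeness makes the two boundary strings longer than the overlap,
   so they realize it. *)
Lemma assembled_merge2 X sX Y sY : assembled S (ov X Y) X sX ->
  assembled S (ov X Y) Y sY -> disjoint_ids sX sY ->
  assembled S (ov X Y) (merge2 X Y) (sX ++ sY).
Proof.
move=> aX aY dXY; apply: assembled_node => //.
have [[_ lX] [hY _]] := (assembled_head_last aX, assembled_head_last aY).
have [[_ uX] [vY _]] := (assembled_ends aX, assembled_ends aY).
have ltu : ov X Y < size (vstr S (last vertex0 sX)).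
  rewrite ltnNge; apply/negP => short.
  have := assembled_infix aY (assembled_range aX lX) (dXY _ (map_f fst lX))
                          (infix_short_suffix uX short).
  by rewrite ltnNge short.
have ltv : ov X Y < size (vstr S (head vertex0 sY)).
  rewrite ltnNge; apply/negP => short.
  have := assembled_infix aX (assembled_range aY hY)
            (disjoint_ids_sym dXY (map_f fst hY)) (infix_short_prefix vY short).
  by rewrite ltnNge short.
by rewrite (ov_suffix_prefix uX vY ltu ltv).
Qed.

Lemma ov_merge2_self_assembled K K' X sX Y sY : assembled S K X sX ->
  assembled S K' Y sY -> disjoint_ids sX sY ->
  ov Y X <= ov X Y -> ov X X <= ov X Y -> ov Y Y <= ov X Y ->
  ov (merge2 X Y) (merge2 X Y) <= ov X Y.
Proof.
move=> aX aY dXY YX XX YY; apply: ov_merge2_self => //.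
  exact: assembled_not_suffix aX aY dXY.
apply/negP => YZ; have XZ := prefix_merge2 X Y.
have [YX'|XY'] := leqP (size Y) (size X).
  have := assembled_not_prefix aY aX (disjoint_ids_sym dXY).
  by rewrite (prefix_shorter YZ XZ YX').
have := assembled_not_prefix aX aY dXY.
by rewrite (prefix_shorter XZ YZ (ltnW XY')).
Qed.

Lemma ov_merge2_assembled K1 K2 K3 X sX Y sY W sW : assembled S K1 X sX ->
  assembled S K2 Y sY -> assembled S K3 W sW ->
  disjoint_ids sX sW -> disjoint_ids sY sW ->
  ov Y W <= ov X Y -> ov X W <= ov X Y -> ov W X <= ov X Y -> ov W Y <= ov X Y ->
  ov (merge2 X Y) W <= ov X Y /\ ov W (merge2 X Y) <= ov X Y.
Proof.
move=> aX aY aW dXW dYW YW XW WX WY; split.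
  apply: ov_merge2l => // YW'.
  by have := assembled_not_prefix aY aW dYW; rewrite YW'.
apply: ov_merge2r => // XW'.
by have := assembled_not_suffix aX aW dXW; rewrite XW'.
Qed.

End Assembled.

(** * The invariant of MGREEDY-RC *)

Section Greedy.

Variable S : seq str.
Hypothesis scs : scs_rc_instance S.

Definition ids (items : seq item) : seq nat := flatten [seq map fst it.2 | it <- items].

Definition ov_bounded (items : seq item) (K : nat) := forall (a b : item) (o o' : bool),
  a \in items -> b \in items -> (a != b) || (o == o') ->
  ov (orient o a).1 (orient o' b).1 <= K.

Definition rotations_no_shorter (t : item) := forall j, 0 < j <= size t.2 ->
  size t.1 <= size (Defs.merge (map (vstr S) (rot j t.2))).

(* K bounds the admissible overlaps left; every merge so far used one >= K. *)
Definition greedy_inv (st : gstate) := [/\ uniq (ids st.1),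
  (exists2 K, ov_bounded st.1 K & {in st.1, forall it, assembled S K it.1 it.2})
  & {in st.2, forall t, rotations_no_shorter t}].

Lemma max_ov_bounded items v : max_ov items v -> ov_bounded items v.
Proof.
move=> bv a b o o' ai bi ab_oo'.
have := bv (index a items) (index b items) o o'; rewrite !index_mem !nth_index //.
apply=> //; rewrite /admissible; case: (eqVneq a b) ab_oo' => [<- /= ->|ab _].
  by rewrite eqxx.
apply/orP; right; apply: contra_neq ab => /(congr1 (nth a items)).
by rewrite !nth_index.
Qed.

Lemma ov_bounded_sub items items' v :
  {subset items' <= items} -> ov_bounded items v -> ov_bounded items' v.
Proof. by move=> sub bv a b o o' /sub ai /sub bi; apply: bv. Qed.

Lemma assembled_orient K (it : item) o :
  assembled S K it.1 it.2 -> assembled S K (orient o it).1 (orient o it).2.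
Proof. by case: o => //; apply: assembled_rc. Qed.

Lemma rc_orient o (it : item) : rc (orient o it).1 = (orient (~~ o) it).1.
Proof. by case: o => //=; rewrite rcK. Qed.

Lemma perm_fst_orient o (it : item) : perm_eq (map fst (orient o it).2) (map fst it.2).
Proof. by case: o => //; rewrite /= map_fst_rcseq perm_rev. Qed.

Lemma disjoint_ids_orient (a b : item) :
  disjoint_ids a.2 b.2 -> forall o o', disjoint_ids (orient o a).2 (orient o' b).2.
Proof. by move=> ab o o' i; rewrite !(perm_mem (perm_fst_orient _ _)); apply: ab. Qed.
Arguments disjoint_ids_orient {a b}.

Lemma perm_ids s t : perm_eq s t -> perm_eq (ids s) (ids t).
Proof. by move=> st; apply/perm_flatten/perm_map. Qed.

Lemma ids_cons_disjoint it items :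
  uniq (ids (it :: items)) -> {in items, forall b, disjoint_ids it.2 b.2}.
Proof.
rewrite /ids /= cat_uniq => /and3P[_ /hasPn nb _] b bi i ii.
apply/negP => ib; have /nb : i \in ids items.
  by apply/flattenP; exists (map fst b.2); rewrite // (map_f (fun it : item => _)).
by rewrite ii.
Qed.

Lemma disjoint_item_neq K (a b : item) :
  assembled S K a.1 a.2 -> disjoint_ids a.2 b.2 -> a != b.
Proof.
move=> aa ab; apply/eqP => e; have [ha _] := assembled_head_last aa.
by have := ab _ (map_f fst ha); rewrite -e map_f.
Qed.

Lemma ov_bounded_rcons items (z : item) L :
  ov_bounded items L -> ov z.1 z.1 <= L ->
  (forall b o, b \in items ->
     ov z.1 (orient o b).1 <= L /\ ov (orient o b).1 z.1 <= L) ->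
  ov_bounded (rcons items z) L.
Proof.
move=> bL zz zb a b o o'; rewrite !mem_rcons !inE.
case/predU1P=> [->|ai] /predU1P[->|bi] ab.
- by move: ab; rewrite eqxx /= => /eqP <-; case: o; rewrite /= ?ov_rc.
- case: o {ab} => /=; last exact: (zb b o' bi).1.
  by rewrite ov_rcl rc_orient; apply: (zb b (~~ o') bi).2.
- case: o' {ab} => /=; last exact: (zb a o ai).2.
  by rewrite ov_rcr rc_orient; apply: (zb a (~~ o) ai).1.
- exact: bL.
Qed.

Lemma ov_bounded_merge K (it1 it2 : item) rest o1 o2 :
  uniq (ids (it1 :: it2 :: rest)) ->
  {in it1 :: it2 :: rest, forall it, assembled S K it.1 it.2} ->
  ov_bounded (it1 :: it2 :: rest) (ov (orient o1 it1).1 (orient o2 it2).1) ->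
  ov_bounded (rcons rest (merge2 (orient o1 it1).1 (orient o2 it2).1,
                          (orient o1 it1).2 ++ (orient o2 it2).2))
             (ov (orient o1 it1).1 (orient o2 it2).1).
Proof.
move=> U aK bL; have U2 : uniq (ids (it2 :: rest)).
  by move: U; rewrite /ids /= cat_uniq => /and3P[].
have i1 : it1 \in it1 :: it2 :: rest by rewrite mem_head.
have i2 : it2 \in it1 :: it2 :: rest by rewrite !inE eqxx orbT.
have ir b : b \in rest -> b \in it1 :: it2 :: rest by rewrite !inE => ->; rewrite !orbT.
have d12 : disjoint_ids it1.2 it2.2 by apply: (ids_cons_disjoint U); rewrite mem_head.
have d1 b : b \in rest -> disjoint_ids it1.2 b.2.
  by move=> bi; apply: (ids_cons_disjoint U); rewrite inE bi orbT.
have d2 b : b \in rest -> disjoint_ids it2.2 b.2 by exact: ids_cons_disjoint U2 b.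
have [a1 a2] := (aK _ i1, aK _ i2).
have n12 := disjoint_item_neq a1 d12.
have n1 b : b \in rest -> it1 != b by move=> bi; apply: disjoint_item_neq a1 (d1 b bi).
have n2 b : b \in rest -> it2 != b by move=> bi; apply: disjoint_item_neq a2 (d2 b bi).
apply: ov_bounded_rcons => [|/=|b o bi].
- by apply: ov_bounded_sub bL => b /ir.
- apply: (ov_merge2_self_assembled scs (assembled_orient o1 a1)
           (assembled_orient o2 a2) (disjoint_ids_orient d12 o1 o2));
    by apply: bL; rewrite // ?eqxx ?orbT // eq_sym n12.
- apply: (ov_merge2_assembled scs (assembled_orient o1 a1) (assembled_orient o2 a2)
           (assembled_orient o (aK _ (ir b bi)))
           (disjoint_ids_orient (d1 b bi) o1 o) (disjoint_ids_orient (d2 b bi) o2 o));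
    by apply: bL; rewrite ?i1 ?i2 ?(ir b bi) ?n1 ?n2 // eq_sym ?n1 ?n2.
Qed.

Lemma greedy_inv_init : greedy_inv (init_state S).
Proof.
split=> //=; first by rewrite /ids -map_comp flatten_seq1 iota_uniq.
exists (\max_(it <- (init_state S).1) size it.1).
  move=> a b o o' ai _ _; apply: leq_trans (ov_leql _ _) _.
  have -> : size (orient o a).1 = size a.1 by case: o; rewrite /= ?size_rc.
  exact: leq_bigmax_seq.
move=> _ /mapP[i + ->]; rewrite mem_iota => /andP[_ iS].
exact: (@assembled_leaf S _ (i, false) iS).
Qed.

Lemma greedy_inv_close items rest T it o : perm_eq items (it :: rest) ->
  greedy_inv (items, T) -> greedy_inv (rest, rcons T (orient o it)).
Proof.
move=> pitems [/= U [K bK aK] rotT].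
have sub : {subset rest <= items} by move=> a ai; rewrite (perm_mem pitems) inE ai orbT.
have iti : it \in items by rewrite (perm_mem pitems) mem_head.
split=> /=.
- by move: U; rewrite (perm_uniq (perm_ids pitems)) /ids /= cat_uniq => /and3P[].
- by exists K; [apply: ov_bounded_sub bK | move=> a /sub /aK].
- move=> t; rewrite mem_rcons inE => /predU1P[->|/rotT//] j js.
  apply: (assembled_rot (assembled_orient o (aK _ iti))) => //.
  by apply: bK; rewrite ?eqxx ?orbT.
Qed.

Lemma greedy_inv_merge items rest T (it1 it2 : item) o1 o2 :
  perm_eq items (it1 :: it2 :: rest) ->
  max_ov items (ov (orient o1 it1).1 (orient o2 it2).1) ->
  greedy_inv (items, T) ->
  greedy_inv (rcons rest (merge2 (orient o1 it1).1 (orient o2 it2).1,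
                          (orient o1 it1).2 ++ (orient o2 it2).2), T).
Proof.
move=> pitems /max_ov_bounded bL [/= U [K bK aK] rotT].
have sub : {subset it1 :: it2 :: rest <= items} by move=> a; rewrite (perm_mem pitems).
have {}U : uniq (ids (it1 :: it2 :: rest)) by rewrite -(perm_uniq (perm_ids pitems)).
have d12 : disjoint_ids it1.2 it2.2 by apply: (ids_cons_disjoint U); rewrite mem_head.
have i1 : it1 \in items by rewrite sub ?mem_head.
have i2 : it2 \in items by rewrite sub // !inE eqxx orbT.
have LK : ov (orient o1 it1).1 (orient o2 it2).1 <= K.
  by apply: bK; rewrite // (disjoint_item_neq (aK _ i1) d12).
have aL : {in it1 :: it2 :: rest, forall it,
    assembled S (ov (orient o1 it1).1 (orient o2 it2).1) it.1 it.2}.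
  by move=> it /sub /aK; apply: assembled_weaken.
split=> //=.
- rewrite (perm_uniq (_ : perm_eq _ (ids (it1 :: it2 :: rest)))) //.
  rewrite /ids map_rcons flatten_rcons /= map_cat perm_catC -catA.
  by rewrite !perm_cat ?perm_fst_orient.
- exists (ov (orient o1 it1).1 (orient o2 it2).1).
    by apply: ov_bounded_merge U aL (ov_bounded_sub sub bL).
  move=> it; rewrite mem_rcons inE => /predU1P[-> /=|itr]; last first.
    by apply: aL; rewrite !inE itr !orbT.
  apply: (assembled_merge2 scs (assembled_orient o1 (aL _ (mem_head _ _)))).
    by apply: assembled_orient; apply: aL; rewrite !inE eqxx orbT.
  exact: disjoint_ids_orient d12 o1 o2.
Qed.

Lemma greedy_inv_run st T : grun st T -> greedy_inv st ->
  {in T, forall t, rotations_no_shorter t}.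
Proof.
elim=> [T0 [_ _ rotT] // | st0 st' T0 step _ IH] inv; apply: IH; move: inv.
case: st0 st' / step => [items rest T1 it o pitems _ | items rest T1 it1 it2 o1 o2].
- exact: greedy_inv_close.
- exact: greedy_inv_merge.
Qed.

End Greedy.

Theorem lemma16 (S : seq str) (T : seq item) (xC : seq vertex -> str) :
  scs_rc_instance S ->
  mgreedy_rc S T ->
  (forall C, C \in map snd T -> xC_props S C (xC C)) ->
  \sum_(t <- T) size t.1 <= \sum_(C <- map snd T) size (xC C).
Proof.
move=> scs run xCP; have rotT := greedy_inv_run scs run (greedy_inv_init S).
rewrite big_map big_seq [X in _ <= X]big_seq; apply: leq_sum => t tT.
have [j [js [suf _ _ _]]] := xCP t.2 (map_f snd tT).
exact: leq_trans (rotT t tT j js) (size_suffix suf).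
Qed.
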